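(* Let $\theta \geq 2$ be an integer, $F = 4\theta - 1$, and $p_j = \binom{F}{j} 2^{-F}$ for $j = 0,\ldots,F$. Then $$\sum_{j \leq \theta} (-j)\, p_j + \sum_{\theta < j \leq F} \big(j + 2(1 - j/F - \theta)\big) p_j > 0.$$
   Context: This quantity is the expected value $E\phi(e)$ of the weight $\phi(e) = -\zeta_0(e)$ if $\zeta_0(e) \leq \theta$ and $\phi(e) = \zeta_0(e) + 2(X - \theta)$ otherwise, where $\zeta_0(e) \sim \mathrm{Binomial}(F,1/2)$ and, given $\zeta_0(e)$, $X$ is Bernoulli$(1 - \zeta_0(e)/F)$. *)

From mathcomp Require Import all_boot all_order all_algebra.
Set Implicit Arguments. Unset Strict Implicit. Unset Printing Implicit Defensive.
Import Order.TTheory GRing.Theory Num.Theory.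
Local Open Scope ring_scope.

Definition pj (F j : nat) : rat := ('C(F, j))%:R / 2%:R ^+ F.

From mathcomp Require Import all_boot all_order all_algebra.
From mathcomp Require Import zify ring lra.
Import Order.TTheory GRing.Theory Num.Theory.
Local Open Scope ring_scope.

(* Since p_j = p_(F-j) and F + 1 = 4 theta, pairing j with F - j turns the
   sum into sum_(j < 2 theta) (phi j + phi (F - j)) p_j.  The paired weight is
   2 theta - 1 - 2j + 2j/F >= 0 for j < theta, equals 1 for theta < j < 2 theta,
   and only the term j = theta is negative, with weight -1 + 2 theta/F.  As
   p_theta <= p_(theta+1), the terms j = theta and j = theta + 1 together
   contribute at least (2 theta / F) p_theta > 0. *)

Lemma big_nat_fold (V : nmodType) n (f : nat -> V) :
  \sum_(0 <= j < n.*2) f j = \sum_(0 <= j < n) (f j + f (n.*2.-1 - j)%N).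
Proof.
rewrite big_split /= -addnn (big_cat_nat (n := n)) ?leq_addr //=; congr (_ + _).
rewrite -{1}[n]add0n big_addn addnK big_nat_rev.
by apply: eq_big_nat => j /andP[_ ltjn]; congr f; lia.
Qed.

Lemma pj_ge0 F j : 0 <= pj F j.
Proof. by rewrite /pj divr_ge0 ?exprn_ge0. Qed.

Lemma pj_gt0 F j : (j <= F)%N -> 0 < pj F j.
Proof. by move=> lejF; rewrite /pj divr_gt0 ?exprn_gt0 // ltr0n bin_gt0. Qed.

Lemma pj_leS F j : (j < F - j)%N -> pj F j <= pj F j.+1.
Proof.
move=> ltj; rewrite /pj ler_pM2r ?invr_gt0 ?exprn_gt0 // ler_nat.
by rewrite -(leq_pmul2l (ltn0Sn j)) mul_bin_left leq_mul2r ltj orbT.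
Qed.

Lemma pj_sym F j : (j <= F)%N -> pj F (F - j)%N = pj F j.
Proof. by move=> lejF; rewrite /pj bin_sub. Qed.

Lemma sum_pj_fold (f : nat -> rat) F n : F.+1 = n.*2 ->
  \sum_(0 <= j < F.+1) f j * pj F j = \sum_(0 <= j < n) (f j + f (F - j)%N) * pj F j.
Proof.
move=> F_eq; rewrite F_eq big_nat_fold -F_eq /=.
by apply: eq_big_nat => j /andP[_ ltj]; rewrite pj_sym ?mulrDl //; lia.
Qed.

(* The weight phi(e) of the paper as a function of zeta_0(e) = j, with the
   Bernoulli variable X replaced by its mean 1 - j/F. *)
Definition phi (t F j : nat) : rat :=
  if (j <= t)%N then - j%:R else j%:R + 2%:R * (1 - j%:R / F%:R - t%:R).

Definition phi_pair (t F j : nat) : rat := phi t F j + phi t F (F - j)%N.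

Lemma sum_phi_split t F : (t <= F)%N ->
  \sum_(0 <= j < t.+1) (- (j%:R : rat)) * pj F j
    + \sum_(t.+1 <= j < F.+1) ((j%:R : rat) + 2%:R * (1 - j%:R / F%:R - t%:R)) * pj F j
  = \sum_(0 <= j < F.+1) phi t F j * pj F j.
Proof.
move=> letF; rewrite [RHS](big_cat_nat (n := t.+1)) //=.
congr (_ + _); apply: eq_big_nat => j j_range; rewrite /phi.
  by rewrite ifT //; lia.
by rewrite ifF //; lia.
Qed.

Lemma phi_pair_low t F j : (0 < F)%N -> (j <= t)%N -> (t < F - j)%N ->
  phi_pair t F j = F%:R - 2%:R * t%:R - 2%:R * j%:R + 2%:R * (j%:R / F%:R).
Proof.
move=> F_gt0 lejt ltt; rewrite /phi_pair /phi lejt ifF; last by lia.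
have F_neq0 : F%:R != 0 :> rat by rewrite pnatr_eq0 -lt0n.
by rewrite natrB; [field | lia].
Qed.

Lemma phi_pair_mid t F j : (0 < F)%N -> (t < j)%N -> (t < F - j)%N ->
  phi_pair t F j = F%:R + 2%:R - 4%:R * t%:R.
Proof.
move=> F_gt0 ltj ltt; rewrite /phi_pair /phi !ifF; try lia.
have F_neq0 : F%:R != 0 :> rat by rewrite pnatr_eq0 -lt0n.
by rewrite natrB; [field | lia].
Qed.

Section FourThetaMinusOne.

Variable t : nat.
Hypothesis t_ge2 : (2 <= t)%N.

Local Notation F := (4 * t - 1)%N.

Let natrF : F%:R = 4%:R * t%:R - 1 :> rat.
Proof. by rewrite natrB ?natrM //; lia. Qed.

Let F_gt0 : (0 < F)%N.
Proof. by lia. Qed.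

Lemma phi_pair_ge0 j : (j < t)%N -> 0 <= phi_pair t F j.
Proof.
move=> ltjt; rewrite phi_pair_low ?(ltnW ltjt) //; last by lia.
have : 0 <= j%:R / F%:R :> rat by rewrite divr_ge0.
have : (j + 1)%:R <= t%:R :> rat by rewrite ler_nat addn1.
by rewrite natrD natrF; lra.
Qed.

Lemma phi_pair_eq1 j : (t < j < t.*2)%N -> phi_pair t F j = 1.
Proof. by case/andP=> ltj ltj2; rewrite phi_pair_mid // ?natrF; [ring | lia]. Qed.

Lemma phi_pair_threshold : phi_pair t F t = -1 + 2%:R * (t%:R / F%:R).
Proof. by rewrite phi_pair_low // ?natrF; [ring | lia]. Qed.

Lemma phi_pair_threshold_gt0 :
  0 < phi_pair t F t * pj F t + phi_pair t F t.+1 * pj F t.+1.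
Proof.
rewrite phi_pair_threshold phi_pair_eq1; last by lia.
have le_p : pj F t <= pj F t.+1 by apply: pj_leS; lia.
have ratio_gt0 : 0 < t%:R / F%:R :> rat by rewrite divr_gt0 ?ltr0n //; lia.
have : 0 < pj F t * (2%:R * (t%:R / F%:R)).
  by apply: mulr_gt0; [apply: pj_gt0; lia | apply: mulr_gt0].
by lra.
Qed.

Lemma sum_phi_pair_gt0 : 0 < \sum_(0 <= j < t.*2) phi_pair t F j * pj F j.
Proof.
rewrite (big_cat_nat (n := t)) /=; [|by []|by lia].
rewrite (big_ltn (m := t)); last by lia.
rewrite (big_ltn (m := t.+1)); last by lia.
have below : 0 <= \sum_(0 <= j < t) phi_pair t F j * pj F j.
  rewrite big_nat; apply: sumr_ge0 => j /andP[_ ltj].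
  by rewrite mulr_ge0 ?pj_ge0 ?phi_pair_ge0.
have above : 0 <= \sum_(t.+2 <= j < t.*2) phi_pair t F j * pj F j.
  rewrite big_nat; apply: sumr_ge0 => j j_range.
  by rewrite phi_pair_eq1 ?mul1r ?pj_ge0 //; lia.
have := phi_pair_threshold_gt0.
by lra.
Qed.

End FourThetaMinusOne.

Theorem lemma6 (theta : nat) (htheta : (2 <= theta)%N) :
  let F := (4 * theta - 1)%N in
  0 < \sum_(0 <= j < theta.+1) (- (j%:R : rat)) * pj F j
      + \sum_(theta.+1 <= j < F.+1)
          ((j%:R : rat) + 2%:R * (1 - j%:R / F%:R - theta%:R)) * pj F j.
Proof.
cbv zeta; rewrite sum_phi_split; last by lia.
rewrite (@sum_pj_fold _ _ theta.*2); last by lia.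
exact: sum_phi_pair_gt0.
Qed.
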